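(* Let $G=(V,E)$ be a finite connected multigraph, $\mathscr H_0$ a connected component of its exchange graph with vertex set $\mathscr V_0=\mathscr V_{0,1}\sqcup\mathscr V_{0,2}$ (where $\mathscr V_{0,i}=\mathscr V_0\cap\mathscr V_i$). For $u,v\in V$ the following properties are equivalent: (1) $u\not\simeq v$; (2) there exists $(F,T)\in\mathscr V_{0,1}$ such that $u$ and $v$ lie in different connected components of $F$; (3) there exists $(T',F')\in\mathscr V_{0,2}$ such that $u$ and $v$ lie in different connected components of $F'$.
   Context: A spanning tree of $G$ is a subgraph with vertex set $V$ that is a tree; a spanning 2-forest is a subgraph with vertex set $V$, without cycles, with exactly two connected components; $\mathcal{ST}(G)$, $\mathcal{SF}_2(G)$ denote the sets of these. For a spanning subgraph $G'$, $G'+e$ (resp. $G'-e$) is the spanning subgraph with edge set $E(G')\cup\{e\}$ (resp. $E(G')\setminus\{e\}$). The exchange graph $\mathscr H$ of $G$ has vertex set $\mathscr V_1\sqcup\mathscr V_2$, $\mathscr V_1=\{(F,T): F\in\mathcal{SF}_2(G),T\in\mathcal{ST}(G),E(F)\cap E(T)=\emptyset\}$, $\mathscr V_2=\{(T,F):T\in\mathcal{ST}(G),F\in\mathcal{SF}_2(G),E(F)\cap E(T)=\emptyset\}$, with $(F,T)\in\mathscr V_1$ adjacent to $(T',F')\in\mathscr V_2$ iff there is $e\in E(T)$ with $F'=T-e$ and $T'=F+e$. For a spanning 2-forest $F$, $\mathcal{P}(F)$ is the partition of $V$ into the vertex sets of its two components; for a partition $\mathcal{P}$ of $V$, $E(\mathcal{P})$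 is the set of edges of $G$ joining different parts; $T\setminus E(\mathcal{P}(F))$ is the spanning subgraph with edge set $E(T)\setminus E(\mathcal{P}(F))$. The relation $\simeq$ on $V$ is defined by: $u\simeq v$ iff for every $(F,T)\in\mathscr V_{0,1}$, $u$ and $v$ lie in the same connected component of $T\setminus E(\mathcal{P}(F))$. (The paper shows this equals the analogous relation defined using all $(T,F)\in\mathscr V_{0,2}$.) *)

From mathcomp Require Import all_boot.
Set Implicit Arguments. Unset Strict Implicit. Unset Printing Implicit Defensive.

(* A finite multigraph: vertex finType V, edge finType E (parallel edges and
   loops allowed), each edge e has endpoints (ends e).1 and (ends e).2.
   A spanning subgraph is represented by its edge set S : {set E}. *)
Section Multigraph.
Variables (V E : finType) (ends : E -> V * V).

Definition sadj (S : {set E}) : rel V :=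
  fun x y => [exists e in S, (ends e == (x, y)) || (ends e == (y, x))].

Definition sconn (S : {set E}) (x y : V) : bool := connect (sadj S) x y.

Definition ncomp (S : {set E}) : nat :=
  #|[set [set y | sconn S x y] | x : V]|.

(* S has no cycle: no edge of S lies on a cycle of S, i.e. for each e in S
   the endpoints of e are disconnected in S - e (this also excludes loops). *)
Definition acyclic (S : {set E}) : bool :=
  [forall e in S, ~~ sconn (S :\ e) (ends e).1 (ends e).2].

Definition is_spanning_tree (S : {set E}) : bool := acyclic S && (ncomp S == 1).
Definition is_spanning_2forest (S : {set E}) : bool := acyclic S && (ncomp S == 2).

Definition connected_graph : Prop := forall x y : V, sconn [set: E] x y.

(* Vertices of the exchange graph: inl (F,T) stands for (F,T) in V_1,
   inr (T,F) stands for (T,F) in V_2. *)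
Definition xnode := (({set E} * {set E}) + ({set E} * {set E}))%type.

Definition is_xvertex (a : xnode) : bool :=
  match a with
  | inl (F, T) => [&& is_spanning_2forest F, is_spanning_tree T & [disjoint F & T]]
  | inr (T, F) => [&& is_spanning_tree T, is_spanning_2forest F & [disjoint F & T]]
  end.

Definition xadj12 (FT TF : {set E} * {set E}) : bool :=
  [exists e in FT.2, (TF.2 == FT.2 :\ e) && (TF.1 == e |: FT.1)].

Definition xadj (a b : xnode) : bool :=
  is_xvertex a && is_xvertex b &&
  match a, b with
  | inl FT, inr TF => xadj12 FT TF
  | inr TF, inl FT => xadj12 FT TF
  | _, _ => false
  end.

Definition in_comp (x0 a : xnode) : bool := is_xvertex a && connect xadj x0 a.

Definition cut_edges (F : {set E}) : {set E} :=
  [set e | ~~ sconn F (ends e).1 (ends e).2].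

Definition simeq (x0 : xnode) (u v : V) : Prop :=
  forall F T : {set E}, in_comp x0 (inl (F, T)) ->
    sconn (T :\: cut_edges F) u v.

End Multigraph.

From mathcomp Require Import all_boot.
Set Implicit Arguments. Unset Strict Implicit. Unset Printing Implicit Defensive.

(* Let (F, T) be a vertex of the exchange graph with u and v separated in
   T \ E(P(F)).  Since T is a tree, a single edge e of T crossing the cut of F
   already separates u and v in T - e: in a forest, if u ~ v survives the
   removal of each edge of a set D separately, it survives the removal of all
   of D, for a u-v path avoiding e but forced through f would close a cycle
   through f.  Then (F + e, T - e) is an adjacent vertex of V_2 whose forest
   T - e separates u and v.  A forest F' separating u and v also makes
   T' \ E(P(F')) separate them, so the same exchange moves between V_1 and
   V_2 in both directions while keeping a separating forest. *)

Section Connectivity.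
Variables (V E : finType) (ends : E -> V * V).
Local Notation sc := (sconn ends).
Implicit Types (S A B C D : {set E}) (e f g : E) (u v x y z : V).

Lemma sadj_sym S : symmetric (sadj ends S).
Proof. by move=> x y; apply/existsP/existsP => -[e He]; exists e; rewrite orbC. Qed.

Lemma sconnC S x y : sc S x y = sc S y x.
Proof. exact: (sym_connect_sym (sadj_sym S)). Qed.

Lemma sconnxx S x : sc S x x.
Proof. exact: connect0. Qed.

Lemma sconn_trans S y x z : sc S x y -> sc S y z -> sc S x z.
Proof. exact: connect_trans. Qed.

Lemma sconn_edge S e : e \in S -> sc S (ends e).1 (ends e).2.
Proof.
move=> eS; apply: connect1; apply/existsP; exists e.
by rewrite eS; case: (ends e) => a b; rewrite eqxx.
Qed.

Lemma sconn_lift S S' x y :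
  {in S, forall e, sc S' (ends e).1 (ends e).2} -> sc S x y -> sc S' x y.
Proof.
move=> S'S; apply: connect_sub => {}x {}y /existsP[e /andP[eS /orP[]/eqP ends_e]];
  by have := S'S e eS; rewrite ends_e //= sconnC.
Qed.

Lemma sconnS S1 S2 x y : S1 \subset S2 -> sc S1 x y -> sc S2 x y.
Proof. by move=> sS12; apply: sconn_lift => e /(subsetP sS12)/sconn_edge. Qed.

Lemma sconnD1 S g x y : sc S x y ->
  [|| sc (S :\ g) x y,
      sc (S :\ g) x (ends g).1 && sc (S :\ g) (ends g).2 y
    | sc (S :\ g) x (ends g).2 && sc (S :\ g) (ends g).1 y].
Proof.
set R := S :\ g; set P := [pred z | [|| sc R x z,
  sc R x (ends g).1 && sc R (ends g).2 z | sc R x (ends g).2 && sc R (ends g).1 z]].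
have closedP : closed (sadj ends S) P.
  apply: intro_closed; first exact: sym_connect_sym (sadj_sym S).
  move=> y' z /existsP[e /andP[eS ends_e]]; rewrite !inE.
  have [eg | neg] := eqVneq e g.
    by move: ends_e; rewrite eg => /orP[]/eqP->; rewrite /= !sconnxx !andbT;
      do 4?case: (sc R _ _).
  have Ry'z : sc R y' z by apply: connect1; apply/existsP; exists e; rewrite !inE neg eS.
  by case/or3P=> [|/andP[-> /sconn_trans->]|/andP[-> /sconn_trans->]];
    rewrite ?orbT //; move/sconn_trans->.
by move/(closed_connect closedP); rewrite !inE sconnxx => <-.
Qed.

Lemma sconn_bridge S S' x y a b : S' \subset S -> sc S x y ->
  (sc S' x a && sc S' b y) || (sc S' x b && sc S' a y) -> sc S a b.
Proof.
move=> sS'S xy /orP[]/andP[/(sconnS sS'S) xa /(sconnS sS'S) yb];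
  [|rewrite sconnC]; rewrite sconnC in xa;
  by apply: sconn_trans xa (sconn_trans xy _); rewrite sconnC.
Qed.

Lemma cut_edges_separate F T x y :
  ~~ sc F x y -> ~~ sc (T :\: cut_edges ends F) x y.
Proof. by apply/contra/sconn_lift => e; rewrite !inE negbK => /andP[]. Qed.

Lemma acyclicS S S' : acyclic ends S -> S' \subset S -> acyclic ends S'.
Proof.
move=> acS sS'S; apply/forall_inP => f fS'; apply: contra (forall_inP acS f _).
  by apply: sconnS; apply: setSD.
exact: subsetP sS'S f fS'.
Qed.

Lemma acyclic_sconnD1 S e f u v : acyclic ends S -> f \in S ->
  sc (S :\ f) u v -> sc (S :\ e) u v -> sc (S :\ f :\ e) u v.
Proof.
move=> acS fS Sf_uv Se_uv; apply/contraT => nR.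
have [sRSf ReqR] : S :\ e :\ f \subset S :\ f /\ S :\ e :\ f = S :\ f :\ e.
  by split; [apply/setSD/subD1set | rewrite !setDDl setUC].
have /negP[] := forall_inP acS f fS.
apply: sconn_bridge sRSf Sf_uv _.
by have := sconnD1 f Se_uv; rewrite ReqR (negbTE nR) /= -ReqR.
Qed.

Lemma acyclic_sconnD S D u v : acyclic ends S -> D \subset S -> sc S u v ->
  {in D, forall e, sc (S :\ e) u v} -> sc (S :\: D) u v.
Proof.
have [n] := ubnP #|D|; elim: n S D => // n IH S D ltDn acS sDS Suv DSuv.
have [-> | [f fD]] := set_0Vmem D; first by rewrite setD0.
have fS := subsetP sDS f fD.
have -> : S :\: D = S :\ f :\: (D :\ f) by rewrite setDDl setD1K.
apply: IH; first by rewrite (cardsD1 f D) fD in ltDn.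
- exact: acyclicS acS (subD1set S f).
- exact: setSD.
- exact: DSuv.
- by move=> e /setD1P[_ eD]; apply: acyclic_sconnD1 => //; apply: DSuv.
Qed.

Lemma acyclic_separating_edge S C u v : acyclic ends S -> sc S u v ->
  ~~ sc (S :\: C) u v -> exists2 e, e \in S :&: C & ~~ sc (S :\ e) u v.
Proof.
move=> acS Suv nC.
suff /exists_inP[e eSC neS] : [exists e in S :&: C, ~~ sc (S :\ e) u v] by exists e.
apply: contraNT nC => /exists_inPn sepC.
rewrite -[S :\: C]set0U -(setDv S) -setDIr.
by apply: acyclic_sconnD (subsetIl S C) Suv _ => // e /sepC /negbNE.
Qed.

Local Notation class S x := [set y | sc S x y].

Lemma eq_class S x y : (class S x == class S y) = sc S x y.
Proof.
apply/eqP/idP => [eq_xy | xy]; first by have := sconnxx S y; rewrite -inE -eq_xy inE.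
by apply/setP => z; rewrite !inE; apply/idP/idP; apply: sconn_trans; rewrite // sconnC.
Qed.

Lemma class_imset S x : class S x \in [set class S y | y : V].
Proof. by apply/imsetP; exists x. Qed.

Lemma ncomp1_sconn S x y : ncomp ends S = 1 -> sc S x y.
Proof.
move/eqP/cards1P => [c ncS]; rewrite -eq_class.
by have := class_imset S x; have := class_imset S y; rewrite ncS !inE => /eqP-> /eqP->.
Qed.

Lemma ncomp2_sconn S a b x : ncomp ends S = 2 -> ~~ sc S a b -> sc S a x || sc S b x.
Proof.
rewrite /ncomp => ncS nab; have := class_imset S x.
suff <- : [set class S a; class S b] = [set class S y | y : V].
  by rewrite !inE !(eq_sym (class S x)) !eq_class.
apply/eqP; rewrite eqEcard cards2 eq_class nab ncS andbT.
by apply/subsetP => c /set2P[]->; apply: class_imset.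
Qed.

Lemma sconn_ncomp1 S a : (forall x, sc S a x) -> ncomp ends S = 1.
Proof.
move=> Sa; apply/eqP/cards1P; exists (class S a); apply/setP => c.
by apply/imsetP/set1P => [[x _ ->] | ->]; [apply/eqP; rewrite eq_class sconnC | exists a].
Qed.

Lemma sconn_ncomp2 S a b : ~~ sc S a b -> (forall x, sc S a x || sc S b x) ->
  ncomp ends S = 2.
Proof.
move=> nab Sab; rewrite /ncomp.
have -> : [set class S x | x : V] = [set class S a; class S b].
  apply/setP => c; apply/imsetP/set2P => [[x _ ->] | [] ->];
    [| by exists a | by exists b].
  by case/orP: (Sab x) => ax; [left | right]; apply/eqP; rewrite eq_class sconnC.
by rewrite cards2 eq_class nab.
Qed.

Lemma acyclicU1 B e : acyclic ends B -> ~~ sc B (ends e).1 (ends e).2 ->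
  acyclic ends (e |: B).
Proof.
move=> acB nab; have eB : e \notin B by apply: contra nab; apply: sconn_edge.
apply/forall_inP => f /setU1P[-> | fB]; first by rewrite setU1K.
apply: contra nab => eB_f; apply: sconn_bridge (subD1set B f) (sconn_edge fB) _.
have := sconnD1 e eB_f.
by rewrite setDDl (setUC [set f]) -setDDl setU1K // (negbTE (forall_inP acB f fB)).
Qed.

Lemma spanning_treeD1 A e : is_spanning_tree ends A -> e \in A ->
  is_spanning_2forest ends (A :\ e).
Proof.
move=> /andP[acA /eqP/ncomp1_sconn connA] eA.
rewrite /is_spanning_2forest (acyclicS acA (subD1set A e)) /=; apply/eqP.
apply: (sconn_ncomp2 (forall_inP acA e eA)) => x.
have := sconnD1 e (connA (ends e).1 x); rewrite sconnxx /=.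
by case/or3P => [-> | -> | /andP[_ ->]]; rewrite ?orbT.
Qed.

Lemma spanning_2forestU1 B e : is_spanning_2forest ends B ->
  ~~ sc B (ends e).1 (ends e).2 -> is_spanning_tree ends (e |: B).
Proof.
move=> /andP[acB /eqP ncB] nab; rewrite /is_spanning_tree acyclicU1 //=; apply/eqP.
apply: (@sconn_ncomp1 _ (ends e).1) => x.
have ab : sc (e |: B) (ends e).1 (ends e).2 by apply/sconn_edge/setU11.
have sBeB : B \subset e |: B by apply: subsetUr.
by case/orP: (ncomp2_sconn x ncB nab) => /(sconnS sBeB) // bx; apply: sconn_trans ab bx.
Qed.

End Connectivity.

Section ExchangeGraph.
Variables (V E : finType) (ends : E -> V * V).
Local Notation sc := (sconn ends).
Local Notation in_comp := (in_comp ends).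

Lemma exchange_edge F T u v : is_spanning_tree ends T ->
  ~~ sc (T :\: cut_edges ends F) u v ->
  exists e, [/\ e \in T, ~~ sc F (ends e).1 (ends e).2 & ~~ sc (T :\ e) u v].
Proof.
move=> /andP[acT /eqP/ncomp1_sconn connT] nuv.
have [e] := acyclic_separating_edge acT (connT u v) nuv.
by rewrite !inE => /andP[eT ecut] ne; exists e.
Qed.

Lemma xvertex_exchange F T e :
  is_spanning_2forest ends F -> is_spanning_tree ends T -> [disjoint F & T] ->
  e \in T -> ~~ sc F (ends e).1 (ends e).2 -> is_xvertex ends (inl (T :\ e, e |: F)).
Proof.
move=> fF tT dFT eT nab /=; rewrite spanning_treeD1 // spanning_2forestU1 //=.
move/pred0P: dFT => dFT; apply/pred0P => x /=; have := dFT x; rewrite /= !inE.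
by case: eqVneq => //= _; rewrite andbC.
Qed.

Lemma in_comp_step x0 a b : in_comp x0 a -> xadj ends a b -> in_comp x0 b.
Proof.
move=> /andP[_ x0a] ab; have /andP[/andP[_ xb] _] := ab.
by rewrite /in_comp xb (connect_trans x0a (connect1 ab)).
Qed.

Lemma exchange12 x0 F T u v : in_comp x0 (inl (F, T)) ->
  ~~ sc (T :\: cut_edges ends F) u v ->
  exists T' F', in_comp x0 (inr (T', F')) /\ ~~ sc F' u v.
Proof.
move=> cFT nuv; have /andP[xFT _] := cFT; have /and3P[fF tT dFT] := xFT.
have [e [eT nab neuv]] := exchange_edge tT nuv.
exists (e |: F), (T :\ e); split => //; apply: in_comp_step cFT _.
have xTF : is_xvertex ends (inr (e |: F, T :\ e)).
  by have := xvertex_exchange fF tT dFT eT nab; rewrite /= andbCA.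
by rewrite /xadj xFT xTF /=; apply/exists_inP; exists e; rewrite ?eqxx.
Qed.

Lemma exchange21 x0 T F u v : in_comp x0 (inr (T, F)) -> ~~ sc F u v ->
  exists F' T', in_comp x0 (inl (F', T')) /\ ~~ sc F' u v.
Proof.
move=> cTF nuv; have /andP[xTF _] := cTF; have /and3P[tT fF dFT] := xTF.
have [e [eT nab neuv]] := exchange_edge tT (cut_edges_separate T nuv).
have eF : e \notin F := contra (@sconn_edge _ _ _ F e) nab.
exists (T :\ e), (e |: F); split => //; apply: in_comp_step cTF _.
rewrite /xadj xTF xvertex_exchange //=; apply/exists_inP; exists e.
  exact: setU11.
by rewrite setU1K // setD1K // !eqxx.
Qed.

Lemma not_simeqP x0 u v : ~ simeq ends x0 u v <->
  exists F T, in_comp x0 (inl (F, T)) /\ ~~ sc (T :\: cut_edges ends F) u v.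
Proof.
split => [nsim | [F [T [cFT nuv]]] sim]; last by rewrite sim in nuv.
pose sep FT := in_comp x0 (inl FT) && ~~ sc (FT.2 :\: cut_edges ends FT.1) u v.
case: (pickP sep) => [[F T] /andP[cFT nuv] | noFT]; first by exists F, T.
by case: nsim => F T cFT; have := noFT (F, T); rewrite /sep cFT => /negbFE.
Qed.

End ExchangeGraph.

Theorem proposition2p10 (V E : finType) (ends : E -> V * V)
  (Gconn : connected_graph ends)
  (x0 : xnode E) (Hx0 : is_xvertex ends x0) (u v : V) :
  (~ simeq ends x0 u v <->
     exists F T : {set E}, in_comp ends x0 (inl (F, T)) /\ ~~ sconn ends F u v) /\
  ((exists F T : {set E}, in_comp ends x0 (inl (F, T)) /\ ~~ sconn ends F u v) <->
     exists T' F' : {set E}, in_comp ends x0 (inr (T', F')) /\ ~~ sconn ends F' u v).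
Proof.
split; split.
- case/not_simeqP => F [T [cFT nuv]].
  have [T' [F' [cTF nuv']]] := exchange12 cFT nuv.
  exact: exchange21 cTF nuv'.
- case=> F [T [cFT nuv]]; apply/not_simeqP; exists F, T.
  by split; last apply: cut_edges_separate.
- by case=> F [T [cFT nuv]]; apply: exchange12 cFT (cut_edges_separate T nuv).
- by case=> T [F [cTF nuv]]; apply: exchange21 cTF nuv.
Qed.
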